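(* Let $r\ge 2$ and let $p=p(n)$ satisfy $p=\omega(n^{-1})$ and $p=o(n^{-1/r})$. Let $U,W\subset[n]$ be sets of vertices of $G(n,p)$ with $|U|=n/(2^r r!\sqrt{e})$. Then with probability $1-\exp(-\Omega(p^{-1}))$ all but at most $p^{-1}$ vertices in $[n]\setminus(U\cup W)$ have at least $r$ neighbours in $U$.
   Context: $G(n,p)$ is the random graph on $[n]$ with each edge independently present with probability $p$; $U,W$ are fixed (not depending on the edges). Asymptotic notation refers to $n\to\infty$. *)

From HB Require Import structures.
From mathcomp Require Import all_boot all_order all_algebra.
From mathcomp Require Import all_classical all_reals all_analysis.
Set Implicit Arguments. Unset Strict Implicit. Unset Printing Implicit Defensive.
Import Order.TTheory GRing.Theory Num.Theory.
Local Open Scope ring_scope.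

(* Graphs on vertex set [n] = 'I_n are encoded by their edge sets: a graph is a
   set G of pairs (i,j) with i < j (each unordered edge {i,j} is stored once). *)
Definition pairs (n : nat) : {set 'I_n * 'I_n} := [set e : 'I_n * 'I_n | (e.1 < e.2)%N].

Definition adj (n : nat) (G : {set 'I_n * 'I_n}) (u v : 'I_n) : bool :=
  ((u, v) \in G) || ((v, u) \in G).

Definition Gnp_prob (R : realType) (n : nat) (p : R)
    (E : {set 'I_n * 'I_n} -> bool) : R :=
  \sum_(G : {set 'I_n * 'I_n} | (G \subset pairs n) && E G)
     p ^+ #|G| * (1 - p) ^+ (#|pairs n| - #|G|).

Definition deg_in (n : nat) (G : {set 'I_n * 'I_n}) (U : {set 'I_n}) (v : 'I_n) : nat :=
  #|[set u in U | adj G u v]|.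

Definition bad_vertices (n r : nat) (G : {set 'I_n * 'I_n}) (U W : {set 'I_n})
  : {set 'I_n} :=
  [set v | (v \notin U :|: W) && (deg_in G U v < r)%N].

(* For v outside U, Markov's inequality applied to
   e^(r - deg_U v) and the independence of the |U| edges from v to U give
   q := P(deg_U v < r) <= e^r exp(-(1 - 1/e) p |U|).  The events "deg_U v < r"
   for distinct v depend on disjoint edge sets, so the number X of bad vertices
   satisfies E e^X <= exp((e - 1) n q), and Markov again gives
   P(X > 1/p) <= exp((e - 1) n q - 1/p).  As |U| is linear in n and np -> oo,
   (e - 1) n q <= 1/(2p) eventually, whence c = 1/2. *)

From HB Require Import structures.
From mathcomp Require Import all_boot all_order all_algebra.
From mathcomp Require Import all_classical all_reals all_analysis.
From mathcomp Require Import ring lra.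
Set Implicit Arguments.
Unset Strict Implicit.
Unset Printing Implicit Defensive.
Import Order.TTheory GRing.Theory Num.Theory.
Local Open Scope ring_scope.

Definition determined_by (T : finType) (V : Type) (A : {set T})
    (F : {set T} -> V) :=
  forall G, F G = F (G :&: A).

Lemma setIU_subC (T : finType) (A G1 G2 : {set T}) :
  G1 \subset A -> G2 \subset ~: A -> (G1 :|: G2) :&: A = G1.
Proof.
move=> sG1A sG2A; rewrite finset.setIUl (finset.setIidPl sG1A).
suff -> : G2 :&: A = finset.set0 by rewrite finset.setU0.
by apply/eqP; rewrite setI_eq0 finset.disjoints_subset.
Qed.

Lemma big_set_split (R : realType) (T : finType) (A : {set T})
    (F : {set T} -> R) :
  \sum_G F G =
  \sum_(G1 : {set T} | G1 \subset A) \sum_(G2 : {set T} | G2 \subset ~: A)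
    F (G1 :|: G2).
Proof.
rewrite pair_big_dep (reindex_onto (fun G12 => G12.1 :|: G12.2)
  (fun G => (G :&: A, G :&: ~: A))) /=; last first.
  by move=> G _; rewrite -finset.setIUr finset.setUCr finset.setIT.
apply: eq_bigl => -[G1 G2] /=; apply/eqP/andP => [[<- <-]|[sG1 sG2]].
  by rewrite !subsetIr.
by rewrite setIU_subC // finset.setUC setIU_subC // finset.setCK.
Qed.

Lemma expR_mul_bool (R : realType) (t : R) (b : bool) :
  expR (t * b%:R) = 1 + (expR t - 1) * b%:R.
Proof. by case: b; rewrite ?mulr1 ?mulr0 ?expR0 ?addr0 // addrC subrK. Qed.

Lemma indicator_le_expR (R : realType) (b : bool) (x : R) :
  (b -> 0 <= x) -> b%:R <= expR x.
Proof. by case: b => [/(_ isT) x0|_]; rewrite ?expR_ge0 // -expR0 ler_expR. Qed.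

Section ProductExpectation.
Variables (R : realType) (T : finType) (c : T -> bool -> R).

Definition pweight_on (A G : {set T}) : R := \prod_(e in A) c e (e \in G).
Definition pweight (G : {set T}) : R := \prod_e c e (e \in G).
Definition pexpect (F : {set T} -> R) : R := \sum_G pweight G * F G.

Lemma eq_pexpect (F H : {set T} -> R) :
  F =1 H -> pexpect F = pexpect H.
Proof. by move=> FH; apply: eq_bigr => G _; rewrite FH. Qed.

Lemma pexpectZ (b : R) (F : {set T} -> R) :
  pexpect (fun G => b * F G) = b * pexpect F.
Proof.
by rewrite /pexpect mulr_sumr; apply: eq_bigr => G _; rewrite mulrCA.
Qed.

Lemma pexpectD (F H : {set T} -> R) :
  pexpect (fun G => F G + H G) = pexpect F + pexpect H.
Proof. by rewrite -big_split; apply: eq_bigr => G _; rewrite mulrDr. Qed.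

Lemma pexpect_prod_form (h : T -> bool -> R) :
  pexpect (fun G => \prod_e h e (e \in G)) =
  \prod_e (c e true * h e true + c e false * h e false).
Proof.
transitivity (\sum_(G : {set T}) \prod_e (c e (e \in G) * h e (e \in G))).
  by apply: eq_bigr => G _; rewrite big_split.
transitivity (\prod_e \sum_(b : bool) c e b * h e b); last first.
  by apply: eq_bigr => e _; rewrite big_bool.
rewrite bigA_distr_bigA (reindex (fun G : {set T} => [ffun e => e \in G])) /=.
  by apply: eq_bigr => G _; apply: eq_bigr => e _; rewrite ffunE.
exists (fun f : {ffun T -> bool} => [set e | f e]).
  by move=> G _; apply/setP => e; rewrite inE ffunE.
by move=> f _; apply/ffunP => e; rewrite !ffunE inE.
Qed.

Lemma pweight_on_setI (A G : {set T}) : pweight_on A G = pweight_on A (G :&: A).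
Proof. by apply: eq_bigr => e eA; rewrite inE eA andbT. Qed.

Lemma pweight_split (A G : {set T}) :
  pweight G = pweight_on A G * pweight_on (~: A) G.
Proof.
rewrite /pweight /pweight_on (bigID (mem A)); congr (_ * _).
by apply: eq_bigl => e; rewrite /= inE.
Qed.

Lemma pexpectM_split (A : {set T}) (f g : {set T} -> R) :
  determined_by A f -> determined_by (~: A) g ->
  pexpect (fun G => f G * g G) =
  (\sum_(G1 : {set T} | G1 \subset A) pweight_on A G1 * f G1) *
  (\sum_(G2 : {set T} | G2 \subset ~: A) pweight_on (~: A) G2 * g G2).
Proof.
move=> fA gA; rewrite /pexpect (big_set_split A) mulr_suml.
apply: eq_bigr => G1 sG1; rewrite mulr_sumr; apply: eq_bigr => G2 sG2.
have G1E : (G1 :|: G2) :&: A = G1 by rewrite setIU_subC.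
have G2E : (G1 :|: G2) :&: ~: A = G2.
  by rewrite finset.setUC setIU_subC ?finset.setCK.
rewrite (pweight_split A) pweight_on_setI (pweight_on_setI (~: A)) fA gA.
by rewrite G1E G2E mulrACA.
Qed.

Hypothesis c_sum1 : forall e, c e true + c e false = 1.

Lemma pexpect1 : pexpect (fun _ => 1) = 1.
Proof.
have := pexpect_prod_form (fun _ _ => 1); rewrite big1 // => ->.
by rewrite big1 // => e _; rewrite !mulr1 c_sum1.
Qed.

Lemma pexpect_cst (a : R) : pexpect (fun _ => a) = a.
Proof. by rewrite -[a in LHS]mulr1 pexpectZ pexpect1 mulr1. Qed.

Lemma pexpect_mem (e : T) : pexpect (fun G => (e \in G)%:R) = c e true.
Proof.
have := pexpect_prod_form (fun e' b => if e' == e then b%:R else 1).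
rewrite (bigD1 e) //= eqxx mulr1 mulr0 addr0 big1 ?mulr1; last first.
  by move=> e' /negbTE ->; rewrite !mulr1 c_sum1.
move=> <-; apply: eq_pexpect => G.
by rewrite (bigD1 e) //= eqxx big1 ?mulr1 // => e' /negbTE ->.
Qed.

Lemma pexpectM_indep (A : {set T}) (f g : {set T} -> R) :
  determined_by A f -> determined_by (~: A) g ->
  pexpect (fun G => f G * g G) = pexpect f * pexpect g.
Proof.
move=> fA gA; have one (B : {set T}) : determined_by B (fun _ => 1 : R) by [].
pose w (B : {set T}) (h : {set T} -> R) :=
  \sum_(G1 : {set T} | G1 \subset B) pweight_on B G1 * h G1.
(* Splitting against [1] shows that pexpect f and pexpect g are the two
   marginal sums times the total masses of the other side, whose product is
   pexpect 1 = 1. *)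
have mass1 : w A (fun _ => 1) * w (~: A) (fun _ => 1) = 1.
  rewrite -pexpectM_split // -[RHS]pexpect1.
  by apply: eq_pexpect => G; rewrite mulr1.
have -> : pexpect f = w A f * w (~: A) (fun _ => 1).
  by rewrite -pexpectM_split //; apply: eq_pexpect => G; rewrite mulr1.
have -> : pexpect g = w A (fun _ => 1) * w (~: A) g.
  by rewrite -pexpectM_split //; apply: eq_pexpect => G; rewrite mul1r.
rewrite (pexpectM_split fA gA); move: mass1.
move: (w A _) (w (~: A) _) => a b ab; rewrite -[LHS]mulr1 -ab /w; ring.
Qed.

Lemma pexpect_prod_indep (I : eqType) (s : seq I) (A : I -> {set T})
    (f : I -> {set T} -> R) :
  uniq s -> {in s &, forall i j, i != j -> [disjoint A i & A j]} ->
  {in s, forall i, determined_by (A i) (f i)} ->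
  pexpect (fun G => \prod_(i <- s) f i G) = \prod_(i <- s) pexpect (f i).
Proof.
elim: s => [_ _ _|i s IHs /andP[i_notin_s uniq_s] disjA fA].
  by rewrite big_nil; under eq_pexpect do rewrite big_nil; exact: pexpect1.
have disj_s : {in s &, forall j k, j != k -> [disjoint A j & A k]}.
  by move=> j k js ks; apply: disjA; rewrite inE ?js ?ks orbT.
rewrite big_cons -IHs //; last by move=> j js; apply: fA; rewrite inE js orbT.
under eq_pexpect do rewrite big_cons.
apply: (@pexpectM_indep (A i)) => [|G]; first by apply: fA; rewrite mem_head.
rewrite big_seq [RHS]big_seq; apply: eq_bigr => j js.
have fjA : determined_by (A j) (f j) by apply: fA; rewrite inE js orbT.
have sAj : A j \subset ~: A i.
  rewrite -finset.disjoints_subset disjA ?inE ?js ?orbT ?eqxx //.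
  by apply: contraNneq i_notin_s => <-.
by rewrite fjA [RHS]fjA -finset.setIA (finset.setIidPr sAj).
Qed.

Lemma pexpect_expR_indicator (t : R) (B : {set T} -> bool) :
  pexpect (fun G => expR (t * (B G)%:R)) <=
  expR ((expR t - 1) * pexpect (fun G => (B G)%:R)).
Proof.
under eq_pexpect do rewrite expR_mul_bool.
by rewrite pexpectD pexpect_cst pexpectZ; exact: expR_ge1Dx.
Qed.

Hypothesis c_ge0 : forall e b, 0 <= c e b.

Lemma ler_pexpect (F H : {set T} -> R) :
  (forall G, F G <= H G) -> pexpect F <= pexpect H.
Proof.
by move=> FH; apply: ler_sum => G _; apply: ler_wpM2l; [exact: prodr_ge0|].
Qed.

Lemma pexpect_ge0 (F : {set T} -> R) :
  (forall G, 0 <= F G) -> 0 <= pexpect F.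
Proof.
by move=> F0; apply: sumr_ge0 => G _; apply: mulr_ge0; [exact: prodr_ge0|].
Qed.

Lemma pexpect_indicator_le_expR (B : {set T} -> bool) (F : {set T} -> R) :
  (forall G, B G -> 0 <= F G) ->
  pexpect (fun G => (B G)%:R) <= pexpect (fun G => expR (F G)).
Proof. by move=> BF; apply: ler_pexpect => G; exact/indicator_le_expR/BF. Qed.

Lemma pexpect_expR_sum_indicator (I : finType) (S : {set I})
    (A : I -> {set T}) (B : I -> {set T} -> bool) (t : R) :
  {in S &, forall i j, i != j -> [disjoint A i & A j]} ->
  {in S, forall i, determined_by (A i) (B i)} ->
  pexpect (fun G => expR (t * \sum_(i in S) (B i G)%:R)) <=
  expR ((expR t - 1) * \sum_(i in S) pexpect (fun G => (B i G)%:R)).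
Proof.
move=> disjA BA; under eq_pexpect do rewrite mulr_sumr expR_sum -big_enum.
rewrite (pexpect_prod_indep (A := A)) ?enum_uniq //.
- rewrite big_enum mulr_sumr expR_sum; apply: ler_prod => i _.
  by rewrite pexpect_ge0 ?pexpect_expR_indicator // => G; exact: expR_ge0.
- by move=> i j; rewrite !mem_enum; apply: disjA.
- by move=> i; rewrite mem_enum => iS G /=; rewrite -BA.
Qed.

End ProductExpectation.

Lemma natr_card_sep (R : realType) (T : finType) (A : {set T}) (P : pred T) :
  (#|[set x in A | P x]|%:R : R) = \sum_(x in A) (P x)%:R.
Proof.
rewrite -sum1_card natr_sum (eq_bigl (fun x => (x \in A) && P x)) => [|x].
  by rewrite big_mkcondr; apply: eq_bigr => x _; case: (P x).
by rewrite inE.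
Qed.

Lemma natr_card_bad (R : realType) n r (G : {set 'I_n * 'I_n})
    (U W : {set 'I_n}) :
  (#|bad_vertices r G U W|%:R : R) =
  \sum_(v in ~: (U :|: W)) (deg_in G U v < r)%:R.
Proof.
rewrite -natr_card_sep; congr (_%:R).
by apply: eq_card => v; rewrite /bad_vertices !inE.
Qed.

Definition star n (U : {set 'I_n}) (v : 'I_n) : {set 'I_n * 'I_n} :=
  [set e | (e.1 == v) && (e.2 \in U) || (e.2 == v) && (e.1 \in U)].

Lemma deg_in_star n (U : {set 'I_n}) (v : 'I_n) :
  determined_by (star U v) (fun G => deg_in G U v).
Proof.
move=> G; rewrite /deg_in; apply: eq_card => u; rewrite !inE.
case uU: (u \in U) => //=; by rewrite /adj !inE /= eqxx uU !andbT orbT andbT.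
Qed.

Lemma disjoint_star n (U : {set 'I_n}) (v w : 'I_n) :
  v \notin U -> w \notin U -> v != w -> [disjoint star U v & star U w].
Proof.
move=> vU wU vw; rewrite -setI_eq0; apply/eqP/setP => -[a b]; rewrite !inE /=.
apply/negbTE/negP => /andP[/orP[|] /andP[/eqP-> xU] /orP[|] /andP[/eqP yw _]].
- by apply: (negP vw); rewrite yw.
- by apply: (negP wU); rewrite -yw.
- by apply: (negP wU); rewrite -yw.
- by apply: (negP vw); rewrite yw.
Qed.

Lemma adj_edge_slots n (u v : 'I_n) :
  determined_by [set (u, v); (v, u)] (fun G => adj G u v).
Proof. by move=> G; rewrite /adj !inE !eqxx /= orbT !andbT. Qed.

Lemma disjoint_edge_slots n (u u' v : 'I_n) :
  u != u' -> [disjoint [set (u, v); (v, u)] & [set (u', v); (v, u')]].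
Proof.
move=> uu'; apply/pred0P => -[a b] /=; rewrite !inE !xpair_eqE.
apply/negP => /andP[/orP[] /andP[/eqP-> /eqP->] /orP[] /andP[/eqP xy /eqP zt]];
  by apply: (negP uu'); apply/eqP; congruence.
Qed.

Section GnpExpectation.
Variables (R : realType) (n : nat) (p : R).

(* Non-pairs are never edges, so [pweight gnp_weight] vanishes on graphs that
   are not contained in [pairs n]. *)
Definition gnp_weight (e : 'I_n * 'I_n) (b : bool) : R :=
  if e \in pairs n then (if b then p else 1 - p) else (~~ b)%:R.

Lemma gnp_weight_sum1 e : gnp_weight e true + gnp_weight e false = 1.
Proof. by rewrite /gnp_weight; case: ifP => _; rewrite ?subrKC ?add0r. Qed.

Lemma pweight_gnp (G : {set 'I_n * 'I_n}) : G \subset pairs n ->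
  pweight gnp_weight G = p ^+ #|G| * (1 - p) ^+ (#|pairs n| - #|G|).
Proof.
move=> sG; have out1 e : e \notin pairs n -> gnp_weight e (e \in G) = 1.
  move=> eP; rewrite /gnp_weight (negbTE eP).
  by rewrite (contraNF (fintype.subsetP sG e)).
rewrite /pweight (bigID (mem (pairs n))) /= [X in _ * X]big1 => [|e /out1] //.
have -> : (#|pairs n| - #|G| = #|pairs n :\: G|)%N.
  by rewrite cardsD (finset.setIidPr sG).
rewrite mulr1 (bigID (mem G)) /= -!prodr_const.
congr (_ * _); apply: eq_big => e.
- by case: (boolP (e \in G)) => [/(fintype.subsetP sG) ->|]; rewrite ?andbF.
- by case/andP=> eP eG; rewrite /gnp_weight eP eG.
- by rewrite !inE andbC.
- by case/andP=> eP eG; rewrite /gnp_weight eP (negbTE eG).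
Qed.

Lemma pweight_gnp_eq0 (G : {set 'I_n * 'I_n}) : ~~ (G \subset pairs n) ->
  pweight gnp_weight G = 0.
Proof.
case/fintype.subsetPn => e eG eP.
by rewrite /pweight (bigD1 e) //= /gnp_weight (negbTE eP) eG mul0r.
Qed.

Lemma Gnp_probE (E : {set 'I_n * 'I_n} -> bool) :
  Gnp_prob p E = pexpect gnp_weight (fun G => (E G)%:R).
Proof.
rewrite /Gnp_prob /pexpect big_mkcond; apply: eq_bigr => G _.
have [sG|nsG] := boolP (G \subset pairs n).
  by rewrite pweight_gnp //; case: (E G); rewrite ?mulr1 ?mulr0.
by rewrite pweight_gnp_eq0 ?mul0r.
Qed.

Hypothesis p01 : 0 <= p <= 1.

Lemma gnp_weight_ge0 e b : 0 <= gnp_weight e b.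
Proof.
case/andP: p01 => p0 p1.
by rewrite /gnp_weight; case: ifP; case: b; rewrite ?subr_ge0.
Qed.

Lemma gnp_adj_ge (u v : 'I_n) : u != v ->
  p <= pexpect gnp_weight (fun G => (adj G u v)%:R).
Proof.
move=> uv; pose e := if (u < v)%N then (u, v) else (v, u).
have eP : e \in pairs n.
  rewrite /e; case: (ltngtP u v) => [||/ord_inj uEv]; rewrite inE //.
  by rewrite uEv eqxx in uv.
have -> : p = pexpect gnp_weight (fun G => (e \in G)%:R).
  by rewrite (pexpect_mem gnp_weight_sum1) /gnp_weight; case: ifP => // /negP.
apply: ler_pexpect => [e0 b|G]; first exact: gnp_weight_ge0.
rewrite ler_nat /adj /e.
by case: ifP => _; case: ((u, v) \in G); case: ((v, u) \in G).
Qed.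

Lemma gnp_low_degree (r : nat) (U : {set 'I_n}) (v : 'I_n) : v \notin U ->
  pexpect gnp_weight (fun G => (deg_in G U v < r)%:R) <=
  expR r%:R * expR (- ((1 - expR (-1)) * p * #|U|%:R)).
Proof.
move=> vU; pose F G : R := r%:R + (-1) * (deg_in G U v)%:R.
apply: le_trans (pexpect_indicator_le_expR gnp_weight_ge0
  (B := fun G => (deg_in G U v < r)%N) (F := F) _) _.
  by move=> G; rewrite /F mulN1r subr_ge0 ler_nat => /ltnW.
under eq_pexpect do rewrite /F expRD /deg_in natr_card_sep.
rewrite pexpectZ ler_wpM2l ?expR_ge0 //.
apply: le_trans (pexpect_expR_sum_indicator gnp_weight_sum1 gnp_weight_ge0
  (S := U) (A := fun u => [set (u, v); (v, u)]) (B := fun u G => adj G u v)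
  (-1) _ _) _.
- by move=> u u' _ _; exact: disjoint_edge_slots.
- by move=> u _; exact: adj_edge_slots.
rewrite ler_expR -mulrA -mulNr opprB; apply: ler_wnM2l.
  by rewrite subr_le0 expR_le1 lerN10.
rewrite mulr_natr -sumr_const; apply: ler_sum => u uU.
by apply: gnp_adj_ge; apply: contraNneq vU => <-.
Qed.

Lemma gnp_many_bad (r : nat) (U W : {set 'I_n}) :
  Gnp_prob p (fun G => ~~ (#|bad_vertices r G U W|%:R <= p^-1)) <=
  expR ((expR 1 - 1) * expR r%:R * n%:R *
        expR (- ((1 - expR (-1)) * p * #|U|%:R)) - p^-1).
Proof.
pose q := expR r%:R * expR (- ((1 - expR (-1)) * p * #|U|%:R)).
have -> : (expR 1 - 1) * expR r%:R * n%:R *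
    expR (- ((1 - expR (-1)) * p * #|U|%:R)) = (expR 1 - 1) * (n%:R * q).
  by rewrite /q; ring.
pose F G : R := - p^-1 + 1 * #|bad_vertices r G U W|%:R.
rewrite Gnp_probE; apply: le_trans (pexpect_indicator_le_expR gnp_weight_ge0
  (B := fun G => ~~ (#|bad_vertices r G U W|%:R <= p^-1)) (F := F) _) _.
  by move=> G; rewrite /F mul1r addrC subr_ge0 -ltNge => /ltW.
under eq_pexpect do rewrite /F expRD natr_card_bad.
rewrite pexpectZ addrC expRD ler_wpM2l ?expR_ge0 //.
apply: le_trans (pexpect_expR_sum_indicator gnp_weight_sum1 gnp_weight_ge0
  (S := ~: (U :|: W)) (A := star U) (B := fun v G => (deg_in G U v < r)%N)
  1 _ _) _.
- move=> v w; rewrite !inE !negb_or => /andP[vU _] /andP[wU _].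
  exact: disjoint_star.
- by move=> v _ G; rewrite /= -deg_in_star.
have e1_ge0 : 0 <= expR 1 - 1 :> R by rewrite subr_ge0 -expR0 ler_expR.
rewrite ler_expR ler_wpM2l //.
apply: (@le_trans _ _ (\sum_(v in ~: (U :|: W)) q)).
  apply: ler_sum => v; rewrite !inE negb_or => /andP[vU _].
  exact: gnp_low_degree.
rewrite sumr_const -[q *+ _]mulr_natl ler_wpM2r ?mulr_ge0 ?expR_ge0 // ler_nat.
by apply: leq_trans (max_card _) _; rewrite card_ord.
Qed.

End GnpExpectation.

Lemma sqr_le_2expR (R : realType) (y : R) : 0 <= y -> y ^+ 2 <= 2 * expR y.
Proof.
move=> y0; have := expR_ge1Dxn 1 y0.
have -> : (1.+1)`!%:R = 2 :> R by [].
lra.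
Qed.

Lemma mulr_expRN_le (R : realType) (a x : R) : 0 < a -> 0 < x ->
  x * expR (- (a * x)) <= 2 / (a ^+ 2 * x).
Proof.
move=> a0 x0; rewrite ler_pdivlMr ?mulr_gt0 ?exprn_gt0 // expRN.
have -> : x / expR (a * x) * (a ^+ 2 * x) = (a * x) ^+ 2 / expR (a * x) by ring.
by rewrite ler_pdivrMr ?expR_gt0 // sqr_le_2expR // ltW ?mulr_gt0.
Qed.

Lemma natr_absz_floor_ge (R : realType) (y : R) : 0 <= y ->
  y - 1 <= (`|Num.floor y|%N)%:R.
Proof.
move=> y0; rewrite natr_absz ger0_norm ?floor_ge0 //.
by have := floorD1_gt y; rewrite intrD; lra.
Qed.

Lemma mulr_expRN_le_halfV (R : realType) (C k alpha p m n : R) :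
  0 < p <= 1 -> 0 < k -> 0 < alpha -> 0 < C -> alpha * n - 1 <= m ->
  4 * C * expR k / (k * alpha) ^+ 2 <= n * p ->
  C * n * expR (- (k * p * m)) <= (2 * p)^-1.
Proof.
move=> /andP[p0 p1] k0 alpha0 C0 m_ge np_ge.
have a0 : 0 < k * alpha by rewrite mulr_gt0.
have np0 : 0 < n * p.
  by apply: lt_le_trans np_ge; rewrite divr_gt0 ?exprn_gt0 ?mulr_gt0 ?expR_gt0.
have kpm_ge : k * alpha * (n * p) - k <= k * p * m.
  have : 0 <= k * p * (m - (alpha * n - 1)).
    by rewrite mulr_ge0 ?subr_ge0 // mulr_ge0 // ltW.
  have : 0 <= k * (1 - p) by rewrite mulr_ge0 ?subr_ge0 // ltW.
  nra.
have E_le : n * p * expR (- (k * p * m)) <=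
    expR k * (n * p * expR (- (k * alpha * (n * p)))).
  by rewrite mulrCA ler_wpM2l ?(ltW np0) // -expRD ler_expR; lra.
rewrite -[X in _ <= X]div1r ler_pdivlMr ?mulr_gt0 //.
have -> : C * n * expR (- (k * p * m)) * (2 * p) =
    2 * C * (n * p * expR (- (k * p * m))) by ring.
apply: (@le_trans _ _ (2 * C * (expR k * (2 / ((k * alpha) ^+ 2 * (n * p)))))).
  rewrite ler_wpM2l ?mulr_ge0 ?(ltW C0) //; apply: le_trans E_le _.
  by rewrite ler_wpM2l ?expR_ge0 // mulr_expRN_le.
have -> : 2 * C * (expR k * (2 / ((k * alpha) ^+ 2 * (n * p)))) =
    4 * C * expR k / (k * alpha) ^+ 2 / (n * p).
  have n0 : n != 0 by apply: contraTneq np0 => ->; rewrite mul0r ltxx.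
  by field; rewrite n0 !gt_eqF.
by rewrite ler_pdivrMr // mul1r.
Qed.

Local Open Scope classical_set_scope.
Local Open Scope ring_scope.

Theorem lemma6 (R : realType) (r : nat) (p : nat -> R)
  (U W : forall n : nat, {set 'I_n}) :
  (2 <= r)%N ->
  (forall n, 0 <= p n <= 1) ->
  (* p = omega(n^{-1}) *)
  (fun n => n%:R * p n) @ \oo --> +oo ->
  (* p = o(n^{-1/r}) *)
  (fun n => (n%:R `^ (r%:R^-1)) * p n) @ \oo --> 0 ->
  (* |U| = n / (2^r r! sqrt e), up to rounding down *)
  (forall n, #|U n| = `| Num.floor (n%:R / (2 ^+ r * r`!%:R * Num.sqrt (expR (1 : R)))) |%N) ->
  exists c : R, 0 < c /\
    \forall n \near \oo,
      Gnp_prob (p n) (fun G => ~~ (#|bad_vertices r G (U n) (W n)|%:R <= (p n)^-1))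
        <= expR (- (c / p n)).
Proof.
move=> _ p01 np_oo _ cardU.
pose kappa : R := 1 - expR (-1).
pose alpha : R := (2 ^+ r * r`!%:R * Num.sqrt (expR 1))^-1.
pose C : R := (expR 1 - 1) * expR r%:R.
have kappa_gt0 : 0 < kappa by rewrite subr_gt0 expR_lt1 ltrN10.
have alpha_gt0 : 0 < alpha.
  by rewrite invr_gt0 !mulr_gt0 ?exprn_gt0 ?ltr0n ?fact_gt0
    ?sqrtr_gt0 ?expR_gt0.
have C_gt0 : 0 < C by rewrite mulr_gt0 ?expR_gt0 // subr_gt0 expR_gt1.
exists (1 / 2); split; first by rewrite divr_gt0.
near=> n.
have np_ge : 4 * C * expR kappa / (kappa * alpha) ^+ 2 <= n%:R * p n.
  by near: n; move/cvgryPge: np_oo; apply.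
have p_in : 0 < p n <= 1.
  case/andP: (p01 n) => p0 ->; rewrite andbT lt_neqAle p0 andbT.
  apply: contraTneq np_ge => <-; rewrite mulr0 -ltNge.
  by rewrite divr_gt0 ?exprn_gt0 ?mulr_gt0 ?expR_gt0.
have U_ge : alpha * n%:R - 1 <= #|U n|%:R.
  by rewrite cardU mulrC; apply: natr_absz_floor_ge; rewrite mulr_ge0 // ltW.
have tail := mulr_expRN_le_halfV p_in kappa_gt0 alpha_gt0 C_gt0 U_ge np_ge.
apply: le_trans (gnp_many_bad (p01 n) r (U n) (W n)) _.
rewrite ler_expR.
have -> : - (1 / 2 / p n) = (2 * p n)^-1 - (p n)^-1.
  by field; rewrite gt_eqF // (andP p_in).1.
by rewrite lerD2r.
Unshelve. all: end_near.
Qed.
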